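(* Consider the uplink system and the transmit-power minimization problem described in the context. Let $(\mathbf{x},\mathbf{y},\mathbf{W},\mathbf{p})$ be any point satisfying the constraints of that problem (with the antenna-moving-region constraints $0\le x_m\le x_{\max}$, $0\le y_n\le y_{\max}$ omitted, i.e. the region may be arbitrarily large), where every combining vector $\mathbf{w}_k$ is nonzero. Then for every user $k$, $1\le k\le K$, $$p_k\;\ge\;\bar p_k:=\frac{\sigma^2\,(2^{r_k}-1)}{MN\,\|\mathbf{b}_k\|_1^2}.$$
   Context: A base station (BS) has a cross-linked movable antenna array with $M$ columns and $N$ rows of antennas ($MN$ antennas). The horizontal antenna position vector (APV) is $\mathbf{x}=[x_1,\dots,x_M]^{\mathrm T}\in\mathbb{R}^M$ (horizontal coordinate of the $m$-th column), the vertical APV is $\mathbf{y}=[y_1,\dots,y_N]^{\mathrm T}\in\mathbb{R}^N$ (vertical coordinate of the $n$-th row); antenna $(m,n)$ sits at $(x_m,y_n)$. There are $K$ single-antenna users. User $k$ has $L_k$ channel paths with virtual angles $\vartheta_{k,\ell},\varphi_{k,\ell}\in[-1,1]$ and path-response vector $\mathbf{b}_k=[b_{k,1},\dots,b_{k,L_k}]^{\mathrm T}\in\mathbb{C}^{L_k}$, $\mathbf{b}_k\neq\mathbf{0}$; $\lambda>0$ is the wavelength. The channel $\mathbf{h}_k(\mathbf{x},\mathbf{y})\in\mathbb{C}^{MN}$ has entry indexed by $(m-1)N+n$ equal to $\sum_{\ell=1}^{L_k} b_{k,\ell}\,e^{-\mathrm{j}\frac{2\pi}{\lambda}(x_m\vartheta_{k,\ell}+y_n\varphi_{k,\ell})}$.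 With receive combining matrix $\mathbf{W}=[\mathbf{w}_1,\dots,\mathbf{w}_K]\in\mathbb{C}^{MN\times K}$, transmit powers $\mathbf{p}=(p_1,\dots,p_K)$ and noise power $\sigma^2>0$, the SINR of user $k$ is $$\gamma_k=\frac{|\mathbf{w}_k^{\mathrm H}\mathbf{h}_k(\mathbf{x},\mathbf{y})|^2p_k}{\sum_{q\ne k}|\mathbf{w}_k^{\mathrm H}\mathbf{h}_q(\mathbf{x},\mathbf{y})|^2p_q+\|\mathbf{w}_k\|_2^2\sigma^2}.$$ The problem is: minimize $\sum_{k=1}^K p_k$ over $\mathbf{x},\mathbf{y},\mathbf{W},\mathbf{p}$ subject to $\log_2(1+\gamma_k)\ge r_k$ and $p_k\ge0$ for all $k$ (given rate requirements $r_k\ge 0$), $0\le x_m\le x_{\max}$, $x_{m+1}-x_m\ge d_{\min,x}$ ($1\le m\le M-1$), $0\le y_n\le y_{\max}$, $y_{n+1}-y_n\ge d_{\min,y}$ ($1\le n\le N-1$), with given $d_{\min,x},d_{\min,y}>0$. $\|\cdot\|_1$ is the $\ell_1$ norm. *)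

From mathcomp Require Import all_boot all_order all_algebra.
From mathcomp Require Import complex.
From mathcomp Require Import all_classical all_reals all_analysis.
Set Implicit Arguments. Unset Strict Implicit. Unset Printing Implicit Defensive.
Import Order.TTheory GRing.Theory Num.Theory.
Local Open Scope ring_scope.
Local Open Scope complex_scope.

Section Defs.
Variable R : realType.

Definition csqnorm (z : R[i]) : R := (complex.Re z) ^+ 2 + (complex.Im z) ^+ 2.
Definition cmod (z : R[i]) : R := Num.sqrt (csqnorm z).

Definition cexpj (t : R) : R[i] := cos t +i* sin t.

Definition log2 (x : R) : R := ln x / ln 2.

Definition l1norm (L : nat) (b : 'I_L -> R[i]) : R := \sum_(l < L) cmod (b l).

Variables (M N : nat).
(* vectors of C^{MN}, indexed by antenna (m, n); entry (m-1)N+n of the paper *)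
Definition hinner (w h : 'I_M * 'I_N -> R[i]) : R[i] :=
  \sum_(a : 'I_M * 'I_N) (w a)^* * h a.
Definition sqnorm2 (w : 'I_M * 'I_N -> R[i]) : R :=
  \sum_(a : 'I_M * 'I_N) csqnorm (w a).

(* channel of a user with L paths, virtual angles theta, phi, path responses b,
   wavelength lam, at horizontal APV x and vertical APV y *)
Definition channel (lam : R) (L : nat) (theta phi : 'I_L -> R) (b : 'I_L -> R[i])
  (x : 'I_M -> R) (y : 'I_N -> R) : 'I_M * 'I_N -> R[i] :=
  fun a => \sum_(l < L) b l *
     cexpj (- (2 * pi / lam) * (x a.1 * theta l + y a.2 * phi l)).

Definition sinr (K : nat) (h w : 'I_K -> 'I_M * 'I_N -> R[i]) (p : 'I_K -> R)
  (s2 : R) (k : 'I_K) : R :=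
  csqnorm (hinner (w k) (h k)) * p k /
  (\sum_(q < K | q != k) csqnorm (hinner (w k) (h q)) * p q
   + sqnorm2 (w k) * s2).
End Defs.

From mathcomp Require Import all_boot all_order all_algebra.
From mathcomp Require Import complex.
From mathcomp Require Import all_classical all_reals all_analysis.
Set Implicit Arguments. Unset Strict Implicit. Unset Printing Implicit Defensive.
Import Order.TTheory GRing.Theory Num.Theory.
Local Open Scope ring_scope.
Local Open Scope complex_scope.

(* Each channel entry sums the path responses with unimodular phases, so its
   modulus is at most the l1 norm of b, whatever the antenna positions.
   Triangle inequality plus Cauchy-Schwarz over the MN antennas then give
   |w^H h|^2 <= MN |b|_1^2 ||w||^2, and dropping the interference from the
   SINR denominator yields sigma^2 (2^r - 1) <= sigma^2 SINR <= MN |b|_1^2 p. *)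

Section SumSquares.
Variable R : realDomainType.

Lemma sqr_sum_le (I : finType) (u : I -> R) :
  (\sum_i u i) ^+ 2 <= #|I|%:R * \sum_i u i ^+ 2.
Proof.
rewrite -(@ler_pMn2r _ 2) // expr2 mulr_suml.
have -> : (\sum_i u i * \sum_j u j) *+ 2 = \sum_i \sum_j u i * u j *+ 2.
  by rewrite -sumrMnl; apply: eq_bigr => i _; rewrite mulr_sumr -sumrMnl.
have -> : (#|I|%:R * \sum_i u i ^+ 2) *+ 2 = \sum_i \sum_j (u i ^+ 2 + u j ^+ 2).
  symmetry; under eq_bigr do rewrite big_split /= sumr_const.
  by rewrite big_split /= sumrMnl sumr_const mulr_natl mulr2n.
apply: ler_sum => i _; apply: ler_sum => j _.
exact: (leif_mean_square_scaled _ _).1.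
Qed.

End SumSquares.

Section ComplexModulus.
Variable R : realType.
Implicit Types z w : R[i].

Lemma cmodE z : cmod z = ComplexField.Normc.normc z.
Proof. by case: z. Qed.

Lemma cmod_ge0 z : 0 <= cmod z.
Proof. exact: sqrtr_ge0. Qed.

Lemma csqnorm_ge0 z : 0 <= csqnorm z.
Proof. by rewrite addr_ge0 ?sqr_ge0. Qed.

Lemma csqnorm_gt0 z : z != 0 -> 0 < csqnorm z.
Proof.
case: z => a c nz; rewrite /csqnorm /= lt_def addr_ge0 ?sqr_ge0 // andbT.
rewrite paddr_eq0 ?sqr_ge0 //.
by rewrite !sqrf_eq0; apply: contra nz => /andP[/eqP-> /eqP->].
Qed.

Lemma sqr_cmod z : cmod z ^+ 2 = csqnorm z.
Proof. by rewrite sqr_sqrtr // csqnorm_ge0. Qed.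

Lemma cmodM z w : cmod (z * w) = cmod z * cmod w.
Proof. by rewrite !cmodE ComplexField.Normc.normcM. Qed.

Lemma cmodD z w : cmod (z + w) <= cmod z + cmod w.
Proof. by rewrite !cmodE le_normcD. Qed.

Lemma cmodJ z : cmod z^* = cmod z.
Proof. by case: z => a c; rewrite /cmod /csqnorm /= sqrrN. Qed.

Lemma cmod_cexpj (t : R) : cmod (cexpj t) = 1.
Proof. by rewrite /cmod /csqnorm /= cos2Dsin2 sqrtr1. Qed.

Lemma cmod_sum_le (I : finType) (F : I -> R[i]) :
  cmod (\sum_i F i) <= \sum_i cmod (F i).
Proof.
elim/big_rec2: _ => [|i y z _ IH].
  by rewrite cmodE ComplexField.Normc.normc0.
by apply: le_trans (cmodD _ _) _; rewrite lerD2l.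
Qed.

Lemma l1norm_ge0 (L : nat) (b : 'I_L -> R[i]) : 0 <= l1norm b.
Proof. by apply: sumr_ge0 => l _; apply: cmod_ge0. Qed.

End ComplexModulus.

Lemma powR2_le_of_le_log2 (R : realType) (r x : R) :
  0 < x -> r <= log2 x -> 2 `^ r <= x.
Proof.
move=> x_gt0; rewrite /log2 ler_pdivlMr ?ln_gt0 ?ltr1n // -ln_powR.
by rewrite ler_ln ?posrE ?powR_gt0.
Qed.

Section Antennas.
Variables (R : realType) (M N : nat).
Implicit Types (w h : 'I_M * 'I_N -> R[i]).

Lemma cmod_channel_le (lam : R) (L : nat) (theta phi : 'I_L -> R)
    (b : 'I_L -> R[i]) (x : 'I_M -> R) (y : 'I_N -> R) a :
  cmod (channel lam theta phi b x y a) <= l1norm b.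
Proof.
apply: le_trans (cmod_sum_le _) _; apply: ler_sum => l _.
by rewrite cmodM cmod_cexpj mulr1.
Qed.

Lemma csqnorm_hinner_le w h (B : R) : 0 <= B -> (forall a, cmod (h a) <= B) ->
  csqnorm (hinner w h) <= (M * N)%:R * B ^+ 2 * sqnorm2 w.
Proof.
move=> B_ge0 hB; rewrite -sqr_cmod.
have inner_le : cmod (hinner w h) <= B * \sum_a cmod (w a).
  apply: le_trans (cmod_sum_le _) _; rewrite mulr_sumr; apply: ler_sum => a _.
  by rewrite cmodM cmodJ mulrC ler_wpM2r ?cmod_ge0.
apply: le_trans (_ : (B * \sum_a cmod (w a)) ^+ 2 <= _).
  by rewrite ler_sqr // nnegrE ?cmod_ge0 // (le_trans (cmod_ge0 _) inner_le).
rewrite exprMn -[leRHS]mulrA [leRHS]mulrCA ler_wpM2l ?sqr_ge0 //.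
apply: le_trans (sqr_sum_le _) _.
by rewrite card_prod !card_ord natrM; under eq_bigr do rewrite sqr_cmod.
Qed.

Lemma sqnorm2_ge0 w : 0 <= sqnorm2 w.
Proof. by apply: sumr_ge0 => a _; apply: csqnorm_ge0. Qed.

Lemma sqnorm2_gt0 w : w <> (fun _ => 0) -> 0 < sqnorm2 w.
Proof.
move=> w_neq0; have /existsNP[a /eqP wa_neq0] : ~ forall a, w a = 0.
  by move=> w0; apply: w_neq0; apply: funext.
rewrite /sqnorm2 (bigD1 a) //= ltr_pwDl ?csqnorm_gt0 //.
by apply: sumr_ge0 => c _; apply: csqnorm_ge0.
Qed.

Section Sinr.
Variables (K : nat) (h W : 'I_K -> 'I_M * 'I_N -> R[i]) (p : 'I_K -> R) (s2 : R).
Hypotheses (s2_gt0 : 0 < s2) (p_ge0 : forall q, 0 <= p q).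

Lemma sinr_ge0 k : 0 <= sinr h W p s2 k.
Proof.
rewrite divr_ge0 ?mulr_ge0 ?csqnorm_ge0 //.
rewrite addr_ge0 ?mulr_ge0 ?sqnorm2_ge0 ?(ltW s2_gt0) //.
by apply: sumr_ge0 => q _; rewrite mulr_ge0 ?csqnorm_ge0.
Qed.

Lemma sinr_le_snr k : W k <> (fun _ => 0) ->
  sinr h W p s2 k <= csqnorm (hinner (W k) (h k)) * p k / (sqnorm2 (W k) * s2).
Proof.
move=> /sqnorm2_gt0 W_gt0; rewrite /sinr.
set D := (X in _ / X); have noise_le : sqnorm2 (W k) * s2 <= D.
  by rewrite lerDr; apply: sumr_ge0 => q _; rewrite mulr_ge0 ?csqnorm_ge0.
have noise_gt0 : 0 < sqnorm2 (W k) * s2 by rewrite mulr_gt0.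
rewrite ler_wpM2l ?mulr_ge0 ?csqnorm_ge0 //.
by rewrite lef_pV2 ?posrE // (lt_le_trans noise_gt0).
Qed.

Lemma sinr_le k (B : R) : W k <> (fun _ => 0) ->
  0 <= B -> (forall a, cmod (h k a) <= B) ->
  sinr h W p s2 k * s2 <= (M * N)%:R * B ^+ 2 * p k.
Proof.
move=> W_neq0 B_ge0 hB; have W_gt0 := sqnorm2_gt0 W_neq0.
apply: le_trans (ler_wpM2r (ltW s2_gt0) (sinr_le_snr W_neq0)) _.
rewrite invfM mulrA mulfVK ?gt_eqF // ler_pdivrMr // [leRHS]mulrAC.
by rewrite ler_wpM2r // csqnorm_hinner_le.
Qed.

End Sinr.
End Antennas.

(* With [c = 0] the quotient is [a / 0 = 0]: this is why theorem1 does not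
   need [b k <> 0]. *)
Lemma ler_divl_of_mul (F : numFieldType) (a c x : F) :
  0 <= c -> 0 <= x -> a <= c * x -> a / c <= x.
Proof.
rewrite le_eqVlt => /predU1P[<- | c_gt0] x_ge0; first by rewrite invr0 mulr0.
by rewrite ler_pdivrMr // mulrC.
Qed.

Theorem theorem1 (R : realType) (M N K : nat) (lam s2 dx dy : R)
  (L : 'I_K -> nat)
  (theta phi : forall k : 'I_K, 'I_(L k) -> R)
  (b : forall k : 'I_K, 'I_(L k) -> R[i])
  (r : 'I_K -> R)
  (x : 'I_M -> R) (y : 'I_N -> R)
  (W : 'I_K -> 'I_M * 'I_N -> R[i]) (p : 'I_K -> R) :
  0 < lam -> 0 < s2 -> 0 < dx -> 0 < dy ->
  (forall k l, -1 <= theta k l <= 1) ->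
  (forall k l, -1 <= phi k l <= 1) ->
  (forall k, b k <> (fun _ => 0)) ->
  (forall k, 0 <= r k) ->
  (* feasibility of (x, y, W, p), moving-region bounds omitted *)
  (forall (i j : 'I_M), nat_of_ord j = (nat_of_ord i).+1 -> dx <= x j - x i) ->
  (forall (i j : 'I_N), nat_of_ord j = (nat_of_ord i).+1 -> dy <= y j - y i) ->
  (forall k, 0 <= p k) ->
  (forall k, r k <= log2 (1 + sinr (fun q => channel lam (theta q) (phi q) (b q) x y)
                                   W p s2 k)) ->
  (* every combining vector is nonzero *)
  (forall k, W k <> (fun _ => 0)) ->
  forall k : 'I_K,
    s2 * (powR 2 (r k) - 1) / ((M * N)%:R * (l1norm (b k)) ^+ 2) <= p k.
Proof.
move=> _ s2_gt0 _ _ _ _ _ _ _ _ p_ge0 rate W_neq0 k.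
set h := fun q => channel lam (theta q) (phi q) (b q) x y.
have rate_le : 2 `^ r k - 1 <= sinr h W p s2 k.
  rewrite lerBlDl; apply: powR2_le_of_le_log2 (rate k).
  by rewrite ltr_pwDl ?sinr_ge0.
have snr_le := sinr_le (h := h) s2_gt0 p_ge0 (W_neq0 k) (l1norm_ge0 (b k))
  (cmod_channel_le lam (theta k) (phi k) (b k) x y).
apply: ler_divl_of_mul; [by rewrite mulr_ge0 ?sqr_ge0 | exact: p_ge0 |].
by apply: le_trans snr_le; rewrite mulrC ler_wpM2r ?(ltW s2_gt0).
Qed.
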